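(* Let $(\Omega,\mathcal A)$ be a Borel space, $(X_\omega,d_\omega)_{\omega\in\Omega}$ a field of metric spaces, and $\mathcal L\subseteq\mathcal S(\Omega,X_\bullet)$ a set of sections satisfying: (a) $\omega\mapsto d_\omega(x_\omega,y_\omega)$ is Borel for all $x_\bullet,y_\bullet\in\mathcal L$, and (c) there is a countable family $\{x^n_\bullet\}_{n\ge1}\subseteq\mathcal L$ with $\{x^n_\omega\}_n$ dense in $X_\omega$ for every $\omega$. Then the following are equivalent: (b) if $y_\bullet\in\mathcal S(\Omega,X_\bullet)$ is such that $\omega\mapsto d_\omega(x_\omega,y_\omega)$ is Borel for all $x_\bullet\in\mathcal L$, then $y_\bullet\in\mathcal L$; (b') $\mathcal L$ is closed under pointwise limits and countable Borel gluings; (b'') $\mathcal L$ is closed under pointwise limits and finite Borel gluings.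
   Context: A section is a family $x_\bullet=(x_\omega)_{\omega\in\Omega}$ with $x_\omega\in X_\omega$; $\mathcal S(\Omega,X_\bullet)$ is the set of sections. If $(x^n_\bullet)_{n\ge1}$ are sections such that $(x^n_\omega)_n$ converges in $X_\omega$ for every $\omega$, the pointwise limit is the section $\omega\mapsto\lim_n x^n_\omega$. If $(x^n_\bullet)$ are sections and $\Omega=\bigsqcup_n\Omega_n$ is a countable (resp. finite) partition into Borel sets, the countable (resp. finite) Borel gluing is the section $x_\bullet$ with $x_\omega=x^n_\omega$ for $\omega\in\Omega_n$. *)

From Stdlib Require Import Reals.
Open Scope R_scope.

Record sigma_algebra (Om : Type) (A : (Om -> Prop) -> Prop) : Prop := {
  sa_full : A (fun _ => True);
  sa_compl : forall E, A E -> A (fun w => ~ E w);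
  sa_cunion : forall E : nat -> Om -> Prop,
      (forall n, A (E n)) -> A (fun w => exists n, E n w)
}.

Inductive borelR : (R -> Prop) -> Prop :=
| borelR_open : forall U, open_set U -> borelR U
| borelR_compl : forall U, borelR U -> borelR (fun x => ~ U x)
| borelR_cunion : forall U : nat -> R -> Prop,
    (forall n, borelR (U n)) -> borelR (fun x => exists n, U n x).

Definition borel_fun {Om : Type} (A : (Om -> Prop) -> Prop) (f : Om -> R) : Prop :=
  forall B, borelR B -> A (fun w => B (f w)).

Definition is_metric {T : Type} (d : T -> T -> R) : Prop :=
  (forall x y, 0 <= d x y) /\
  (forall x y, d x y = 0 <-> x = y) /\
  (forall x y, d x y = d y x) /\
  (forall x y z, d x z <= d x y + d y z).

Definition section {Om : Type} (X : Om -> Type) := forall w : Om, X w.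

Definition mconv {T : Type} (d : T -> T -> R) (u : nat -> T) (l : T) : Prop :=
  forall eps, 0 < eps -> exists N, forall n, (N <= n)%nat -> d (u n) l < eps.

Definition closed_pw_limits {Om : Type} {X : Om -> Type}
  (d : forall w, X w -> X w -> R) (L : section X -> Prop) : Prop :=
  forall (x : nat -> section X) (y : section X),
    (forall n, L (x n)) ->
    (forall w, mconv (d w) (fun n => x n w) (y w)) ->
    L y.

Definition closed_countable_gluing {Om : Type} {X : Om -> Type}
  (A : (Om -> Prop) -> Prop) (L : section X -> Prop) : Prop :=
  forall (P : nat -> Om -> Prop) (x : nat -> section X) (y : section X),
    (forall n, A (P n)) ->
    (forall w, exists n, P n w) ->
    (forall n m w, P n w -> P m w -> n = m) ->
    (forall n, L (x n)) ->
    (forall n w, P n w -> y w = x n w) ->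
    L y.

Definition closed_finite_gluing {Om : Type} {X : Om -> Type}
  (A : (Om -> Prop) -> Prop) (L : section X -> Prop) : Prop :=
  forall (N : nat) (P : nat -> Om -> Prop) (x : nat -> section X) (y : section X),
    (forall n, (n < N)%nat -> A (P n)) ->
    (forall w, exists n, (n < N)%nat /\ P n w) ->
    (forall n m w, (n < N)%nat -> (m < N)%nat -> P n w -> P m w -> n = m) ->
    (forall n, (n < N)%nat -> L (x n)) ->
    (forall n w, (n < N)%nat -> P n w -> y w = x n w) ->
    L y.

Definition prop_b {Om : Type} {X : Om -> Type} (A : (Om -> Prop) -> Prop)
  (d : forall w, X w -> X w -> R) (L : section X -> Prop) : Prop :=
  forall y : section X,
    (forall x, L x -> borel_fun A (fun w => d w (x w) (y w))) -> L y.

From Stdlib Require Import Reals Lra Lia Classical ClassicalEpsilon FunctionalExtensionality PropExtensionality.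
Open Scope R_scope.

(** The equivalences follow from five implications between (b), closure under
    pointwise limits (lim), countable gluing (cg) and finite gluing (fg):
    - (b) -> lim: a pointwise limit of Borel real functions is Borel, and
      [w |-> d(x_w, y^n_w)] converges to [w |-> d(x_w, y_w)];
    - (b) -> cg: on each piece of a Borel partition the distance function of a
      glued section agrees with one of countably many Borel functions;
    - cg -> fg: pad the finite partition with empty pieces;
    - lim + fg -> cg: the countable gluing is the pointwise limit of the finite
      gluings using the first [N] pieces and one default piece for the rest;
    - lim + cg -> (b): gluing the dense sequence along the Borel partition
      "[x^n] is the first term within [1/(k+1)] of [y]" gives sections of [L]
      converging pointwise to [y]. *)

Definition inv_succ (k : nat) : R := / (INR k + 1).

Lemma inv_succ_pos (k : nat) : 0 < inv_succ k.
Proof. unfold inv_succ. apply Rinv_0_lt_compat. pose proof (pos_INR k). lra. Qed.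

Lemma inv_succ_small (eps : R) : 0 < eps -> exists k : nat, inv_succ k < eps.
Proof.
  intros Heps. destruct (archimed_cor1 eps Heps) as [k [Hk Hk0]].
  exists k. apply Rle_lt_trans with (/ INR k); auto.
  apply Rinv_le_contravar; [apply lt_0_INR; auto | lra].
Qed.

Lemma inv_succ_antitone (k n : nat) : (k <= n)%nat -> inv_succ n <= inv_succ k.
Proof.
  intros Hkn. unfold inv_succ. apply Rinv_le_contravar.
  - pose proof (pos_INR k). lra.
  - apply le_INR in Hkn. lra.
Qed.

Lemma open_lt_const (c : R) : open_set (fun r => r < c).
Proof.
  intros r Hr. assert (Hpos : 0 < c - r) by lra.
  exists (mkposreal _ Hpos). intros t Ht. unfold disc in Ht; simpl in Ht.
  pose proof (Rle_abs (t - r)). lra.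
Qed.

Definition ball_inside (U : R -> Prop) (r x : R) : Prop :=
  forall z, Rabs (z - x) < r -> U z.

Lemma borel_ball_inside (U : R -> Prop) (r : R) : borelR (ball_inside U r).
Proof.
  set (V := fun x => exists z, Rabs (z - x) < r /\ ~ U z).
  assert (HV : open_set V).
  { intros x [z [Hzx HUz]].
    assert (Hpos : 0 < r - Rabs (z - x)) by lra.
    exists (mkposreal _ Hpos). intros y Hy. unfold disc in Hy; simpl in Hy.
    exists z; split; auto.
    pose proof (Rabs_triang (z - x) (x - y)).
    replace (z - x + (x - y)) with (z - y) in H by ring.
    rewrite Rabs_minus_sym in Hy. lra. }
  replace (ball_inside U r) with (fun x => ~ V x).
  { apply borelR_compl, borelR_open, HV. }
  apply functional_extensionality; intro x; apply propositional_extensionality.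
  unfold V, ball_inside; split.
  - intros HnV z Hz. apply NNPP; intro HnU. apply HnV. eauto.
  - intros Hin [z [Hz HnU]]. auto.
Qed.

Lemma least_nat (Q : nat -> Prop) (n : nat) :
  Q n -> exists m, Q m /\ forall k, (k < m)%nat -> ~ Q k.
Proof.
  revert n. induction n as [n IH] using (well_founded_induction Wf_nat.lt_wf).
  intros Hn. destruct (classic (exists k, (k < n)%nat /\ Q k)) as [[k [Hk Qk]]|Hnone].
  - eauto.
  - exists n. split; auto. intros k Hk Qk. apply Hnone. eauto.
Qed.

Lemma choose_index {T : Type} (P : nat -> T -> Prop) :
  (forall w, exists n, P n w) -> exists idx : T -> nat, forall w, P (idx w) w.
Proof.
  intros Hcov. exists (fun w => proj1_sig (constructive_indefinite_description _ (Hcov w))).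
  intro w. exact (proj2_sig (constructive_indefinite_description _ (Hcov w))).
Qed.

(** Turning a cover [Q] into a partition: [w] goes to the first [n] with [Q n w]. *)
Definition first_hit {T : Type} (Q : nat -> T -> Prop) (n : nat) (w : T) : Prop :=
  Q n w /\ forall m, (m < n)%nat -> ~ Q m w.

Lemma first_hit_exists {T : Type} (Q : nat -> T -> Prop) (n : nat) (w : T) :
  Q n w -> exists m, first_hit Q m w.
Proof. intros Hn. exact (least_nat (fun m => Q m w) n Hn). Qed.

Lemma first_hit_unique {T : Type} (Q : nat -> T -> Prop) (n m : nat) (w : T) :
  first_hit Q n w -> first_hit Q m w -> n = m.
Proof.
  intros [Qn Hn] [Qm Hm].
  destruct (Compare_dec.lt_eq_lt_dec n m) as [[Hlt|Heq]|Hgt]; auto.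
  - exfalso; exact (Hm n Hlt Qn).
  - exfalso; exact (Hn m Hgt Qm).
Qed.

Definition truncate {T : Type} (N : nat) (P : nat -> T -> Prop) (n : nat) (w : T) : Prop :=
  ((n < N)%nat /\ P n w) \/ (n = N /\ exists m, (N <= m)%nat /\ P m w).

Lemma truncate_cover {T : Type} (N : nat) (P : nat -> T -> Prop) (w : T) (k : nat) :
  P k w -> exists n, (n < S N)%nat /\ truncate N P n w.
Proof.
  intros Hk. destruct (Compare_dec.lt_dec k N) as [HkN|HkN].
  - exists k. split; [lia | left; auto].
  - exists N. split; [lia | right; split; [reflexivity | exists k; split; [lia | auto]]].
Qed.

Lemma truncate_disjoint {T : Type} (N : nat) (P : nat -> T -> Prop) :
  (forall n m w, P n w -> P m w -> n = m) ->
  forall n m w, truncate N P n w -> truncate N P m w -> n = m.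
Proof.
  intros Hdis n m w [[Hn Pn]|[Hn [k [Hk Pk]]]] [[Hm Pm]|[Hm [l [Hl Pl]]]].
  - eauto.
  - pose proof (Hdis _ _ _ Pn Pl). lia.
  - pose proof (Hdis _ _ _ Pm Pk). lia.
  - lia.
Qed.

Section SigmaAlgebra.

Variable Om : Type.
Variable A : (Om -> Prop) -> Prop.
Hypothesis HA : sigma_algebra Om A.

Lemma A_ext (E F : Om -> Prop) : A E -> (forall w, E w <-> F w) -> A F.
Proof.
  intros HE HEF. replace F with E; auto.
  apply functional_extensionality; intro w; apply propositional_extensionality; auto.
Qed.

Lemma A_empty : A (fun _ => False).
Proof. apply (A_ext _ _ (sa_compl _ _ HA _ (sa_full _ _ HA))). intuition. Qed.

Lemma A_countable_inter (E : nat -> Om -> Prop) :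
  (forall n, A (E n)) -> A (fun w => forall n, E n w).
Proof.
  intros HE.
  assert (Hc : A (fun w => ~ exists n, ~ E n w)).
  { apply (sa_compl _ _ HA), (sa_cunion _ _ HA (fun n w => ~ E n w)).
    intro n; apply (sa_compl _ _ HA); auto. }
  apply (A_ext _ _ Hc). intro w; split.
  - intros Hnone n. apply NNPP. intro Hn. apply Hnone. eauto.
  - intros Hall [n Hn]. auto.
Qed.

Lemma A_and (E F : Om -> Prop) : A E -> A F -> A (fun w => E w /\ F w).
Proof.
  intros HE HF.
  pose proof (A_countable_inter (fun n w => match n with O => E w | _ => F w end)
                ltac:(intros [|n]; auto)) as Hc.
  apply (A_ext _ _ Hc). intro w; split.
  - intros Hn. exact (conj (Hn O) (Hn 1%nat)).
  - intros [HEw HFw] [|n]; auto.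
Qed.

Lemma A_or (E F : Om -> Prop) : A E -> A F -> A (fun w => E w \/ F w).
Proof.
  intros HE HF.
  pose proof (sa_cunion _ _ HA (fun n w => match n with O => E w | _ => F w end)
                ltac:(intros [|n]; auto)) as Hc.
  apply (A_ext _ _ Hc). intro w; split.
  - intros [[|n] Hn]; auto.
  - intros [HEw|HFw]; [exists O | exists 1%nat]; auto.
Qed.

Lemma A_const_and (P : Prop) (E : Om -> Prop) : (P -> A E) -> A (fun w => P /\ E w).
Proof.
  intros HE. destruct (classic P) as [HP|HnP].
  - apply (A_ext _ _ (HE HP)). intuition.
  - apply (A_ext _ _ A_empty). intuition.
Qed.

Lemma A_const_imp (P : Prop) (E : Om -> Prop) : A E -> A (fun w => P -> E w).
Proof.
  intros HE. destruct (classic P) as [HP|HnP].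
  - apply (A_ext _ _ HE). intuition.
  - apply (A_ext _ _ (sa_full _ _ HA)). intuition.
Qed.

Lemma first_hit_measurable (Q : nat -> Om -> Prop) (n : nat) :
  (forall m, A (Q m)) -> A (first_hit Q n).
Proof.
  intros HQ. apply A_and; auto.
  apply A_countable_inter. intro m. apply A_const_imp, (sa_compl _ _ HA), HQ.
Qed.

Lemma truncate_measurable (N : nat) (P : nat -> Om -> Prop) (n : nat) :
  (forall m, A (P m)) -> A (truncate N P n).
Proof.
  intros HP. apply A_or; apply A_const_and; auto. intros _.
  apply (sa_cunion _ _ HA (fun m w => (N <= m)%nat /\ P m w)).
  intro m. apply A_const_and. auto.
Qed.

Lemma borel_of_open (g : Om -> R) :
  (forall U, open_set U -> A (fun w => U (g w))) -> borel_fun A g.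
Proof.
  intros Hopen B HB. induction HB.
  - auto.
  - apply (sa_compl _ _ HA); auto.
  - apply (sa_cunion _ _ HA (fun n w => U n (g w))); auto.
Qed.

(** A pointwise limit of Borel functions is Borel: [g w] lies in the open set
    [U] iff, for some radius [1/(m+1)], eventually the [1/(m+1)]-ball around
    [f n w] lies in [U]. *)
Lemma borel_limit (f : nat -> Om -> R) (g : Om -> R) :
  (forall n, borel_fun A (f n)) ->
  (forall w eps, 0 < eps -> exists N, forall n, (N <= n)%nat -> Rabs (f n w - g w) < eps) ->
  borel_fun A g.
Proof.
  intros Hf Hcv. apply borel_of_open. intros U HU.
  assert (Hev : A (fun w => exists m N, forall n, (N <= n)%nat ->
                               ball_inside U (inv_succ m) (f n w))).
  { apply (sa_cunion _ _ HA). intro m. apply (sa_cunion _ _ HA). intro N.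
    apply A_countable_inter. intro n. apply A_const_imp.
    apply (Hf n), borel_ball_inside. }
  apply (A_ext _ _ Hev). intro w; split.
  - intros [m [N Hball]].
    destruct (Hcv w _ (inv_succ_pos m)) as [N' HN'].
    apply (Hball (max N N')); [lia |].
    rewrite Rabs_minus_sym. apply HN'. lia.
  - intros HUg. destruct (HU _ HUg) as [del Hdel].
    assert (Hdel2 : 0 < del / 2) by (destruct del; simpl; lra).
    destruct (inv_succ_small _ Hdel2) as [m Hm].
    destruct (Hcv w _ (inv_succ_pos m)) as [N HN].
    exists m, N. intros n Hn z Hz. apply Hdel. unfold disc.
    pose proof (HN n Hn).
    pose proof (Rabs_triang (z - f n w) (f n w - g w)).
    replace (z - f n w + (f n w - g w)) with (z - g w) in H0 by ring.
    lra.
Qed.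

End SigmaAlgebra.

Lemma metric_dist_lipschitz {T : Type} (d : T -> T -> R) (z x y : T) :
  is_metric d -> Rabs (d z x - d z y) <= d x y.
Proof.
  intros [_ [_ [Hsym Htri]]].
  pose proof (Htri z x y). pose proof (Htri z y x). rewrite (Hsym y x) in H0.
  unfold Rabs; destruct Rcase_abs; lra.
Qed.

Lemma metric_dist_self {T : Type} (d : T -> T -> R) (x : T) : is_metric d -> d x x = 0.
Proof. intros [_ [Hzero _]]. apply Hzero. reflexivity. Qed.

Section Implications.

Variable Om : Type.
Variable A : (Om -> Prop) -> Prop.
Hypothesis HA : sigma_algebra Om A.
Variable X : Om -> Type.
Variable d : forall w, X w -> X w -> R.
Variable L : section X -> Prop.
Hypothesis Hd : forall w, is_metric (d w).
Hypothesis Ha : forall x y, L x -> L y -> borel_fun A (fun w => d w (x w) (y w)).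

Lemma pw_limits_of_b : prop_b A d L -> closed_pw_limits d L.
Proof.
  intros Hb x y Hx Hconv. apply Hb. intros z Hz.
  apply (borel_limit Om A HA (fun n w => d w (z w) (x n w))).
  - intro n. apply Ha; auto.
  - intros w eps Heps. destruct (Hconv w eps Heps) as [N HN]. exists N. intros n Hn.
    eapply Rle_lt_trans; [apply metric_dist_lipschitz, Hd | apply HN, Hn].
Qed.

(** On the piece [P n], the distance from [z] to the glued section is the
    Borel function [w |-> d(z_w, x^n_w)]. *)
Lemma countable_gluing_of_b : prop_b A d L -> closed_countable_gluing A L.
Proof.
  intros Hb P x y HP Hcov Hdis Hx Hy. apply Hb. intros z Hz B HB.
  assert (Hpieces : A (fun w => exists n, P n w /\ B (d w (z w) (x n w)))).
  { apply (sa_cunion _ _ HA (fun n w => P n w /\ B (d w (z w) (x n w)))).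
    intro n. apply (A_and Om A HA); auto. apply Ha; auto. }
  apply (A_ext Om A _ _ Hpieces). intro w; split.
  - intros [n [HPn HBn]]. rewrite (Hy n w HPn). auto.
  - intros HBy. destruct (Hcov w) as [n HPn]. exists n. rewrite <- (Hy n w HPn). auto.
Qed.

(** A finite partition becomes countable by adding empty pieces, on which any
    fixed section [x0] of [L] is used. *)
Lemma finite_gluing_of_countable (x0 : section X) :
  L x0 -> closed_countable_gluing A L -> closed_finite_gluing A L.
Proof.
  intros Hx0 Hcg N P x y HP Hcov Hdis Hx Hy.
  apply (Hcg (fun n w => (n < N)%nat /\ P n w)
             (fun n => if Compare_dec.lt_dec n N then x n else x0)).
  - intro n. apply (A_const_and Om A HA). auto.
  - intro w. destruct (Hcov w) as [n Hn]. eauto.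
  - intros n m w [Hn HPn] [Hm HPm]. eauto.
  - intro n. destruct (Compare_dec.lt_dec n N); auto.
  - intros n w [Hn HPn]. destruct (Compare_dec.lt_dec n N); [auto | lia].
Qed.

(** The countable gluing [y] is the pointwise limit of the gluings along
    [truncate N P], which are finite gluings of [x^0 .. x^(N-1)] and [x^0]. *)
Lemma countable_gluing_of_finite :
  closed_pw_limits d L -> closed_finite_gluing A L -> closed_countable_gluing A L.
Proof.
  intros Hl Hf P x y HP Hcov Hdis Hx Hy.
  destruct (choose_index P Hcov) as [idx Hidx].
  set (xN := fun N n => if Compare_dec.lt_dec n N then x n else x 0%nat).
  apply (Hl (fun N w => xN N (idx w) w)).
  - intro N. apply (Hf (S N) (truncate N P) (xN N)).
    + intros n _. apply (truncate_measurable Om A HA); auto.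
    + intro w. exact (truncate_cover N P w _ (Hidx w)).
    + intros n m w _ _. apply truncate_disjoint; auto.
    + intros n _. unfold xN. destruct (Compare_dec.lt_dec n N); auto.
    + intros n w _ [[Hn HPn]|[Hn [k [Hk HPk]]]].
      * rewrite (Hdis _ _ _ (Hidx w) HPn). reflexivity.
      * rewrite (Hdis _ _ _ (Hidx w) HPk). subst n. unfold xN.
        destruct (Compare_dec.lt_dec k N); [lia |].
        destruct (Compare_dec.lt_dec N N); [lia | reflexivity].
  - intros w eps Heps. exists (S (idx w)). intros n Hn. unfold xN.
    destruct (Compare_dec.lt_dec (idx w) n); [| lia].
    rewrite <- (Hy _ _ (Hidx w)), (metric_dist_self _ _ (Hd w)). auto.
Qed.

Hypothesis Hc : exists xs : nat -> section X,
          (forall n, L (xs n)) /\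
          (forall w (p : X w) eps, 0 < eps -> exists n, d w (xs n w) p < eps).

(** With [Q k n] the Borel set "[d(x^n, y) < 1/(k+1)]", the gluing of the dense
    sequence along [first_hit (Q k)] lies in [L] and is [1/(k+1)]-close to [y];
    letting [k] grow gives [y] as a pointwise limit. *)
Lemma b_of_limits_and_gluing :
  closed_pw_limits d L -> closed_countable_gluing A L -> prop_b A d L.
Proof.
  intros Hl Hcg y Hy. destruct Hc as [xs [Hxs Hdense]].
  set (Q := fun (k n : nat) (w : Om) => d w (xs n w) (y w) < inv_succ k).
  assert (HQ : forall k n, A (Q k n)).
  { intros k n. exact (Hy _ (Hxs n) _ (borelR_open _ (open_lt_const _))). }
  assert (Hcov : forall k w, exists n, first_hit (Q k) n w).
  { intros k w. destruct (Hdense w (y w) _ (inv_succ_pos k)) as [n Hn].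
    exact (first_hit_exists (Q k) n w Hn). }
  destruct (choose_index (fun n (kw : nat * Om) => first_hit (Q (fst kw)) n (snd kw))
                          (fun kw => Hcov (fst kw) (snd kw))) as [nk Hnk].
  apply (Hl (fun k w => xs (nk (k, w)) w)).
  - intro k. apply (Hcg (first_hit (Q k)) xs).
    + intro n. apply (first_hit_measurable Om A HA); auto.
    + apply Hcov.
    + intros n m w. apply first_hit_unique.
    + exact Hxs.
    + intros n w Hn. rewrite (first_hit_unique _ _ _ _ (Hnk (k, w)) Hn). reflexivity.
  - intros w eps Heps. destruct (inv_succ_small _ Heps) as [N HN]. exists N. intros n Hn.
    destruct (Hnk (n, w)) as [Hclose _].
    pose proof (inv_succ_antitone _ _ Hn). unfold Q in Hclose; simpl in Hclose. lra.
Qed.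

End Implications.

Theorem mainTheorem2 (Om : Type) (A : (Om -> Prop) -> Prop)
  (X : Om -> Type) (d : forall w, X w -> X w -> R)
  (L : section X -> Prop)
  (HA : sigma_algebra Om A)
  (Hd : forall w, is_metric (d w))
  (Ha : forall x y, L x -> L y -> borel_fun A (fun w => d w (x w) (y w)))
  (Hc : exists xs : nat -> section X,
          (forall n, L (xs n)) /\
          (forall w (p : X w) eps, 0 < eps -> exists n, d w (xs n w) p < eps)) :
  (prop_b A d L <-> (closed_pw_limits d L /\ closed_countable_gluing A L)) /\
  (prop_b A d L <-> (closed_pw_limits d L /\ closed_finite_gluing A L)).
Proof.
  pose proof Hc as [xs [Hxs _]].
  pose proof (pw_limits_of_b Om A HA X d L Hd Ha) as b_lim.
  pose proof (countable_gluing_of_b Om A HA X d L Ha) as b_cg.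
  pose proof (finite_gluing_of_countable Om A HA X L (xs 0%nat) (Hxs 0%nat)) as cg_fg.
  pose proof (countable_gluing_of_finite Om A HA X d L Hd) as fg_cg.
  pose proof (b_of_limits_and_gluing Om A HA X d L Hc) as lim_cg_b.
  split; split.
  - intros Hb. split; auto.
  - intros [Hlim Hcg]. auto.
  - intros Hb. split; auto.
  - intros [Hlim Hfg]. auto.
Qed.
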